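(* Let $x_0,x_1,\dots,x_N\in\mathbb{R}$ be the features of a time series and let $\|\cdot\|$ be a norm. Let $\mathcal{D}$ be a probability distribution with support $[0,1)$ and $e=\mathbb{E}[\mathcal{D}]$ its mean. Let $\lambda_1,\dots,\lambda_N$ be drawn independently from $\mathcal{D}$, and let $\lambda_0$ be a dummy value. Define recursively $x_{0,\lambda_0}=x_0$ and $x_{i,\lambda_i}=(1-\lambda_i)x_i+\lambda_i x_{i-1,\lambda_{i-1}}$ for $i\ge 1$. For $k\in[0:N]$ let $g(\lambda_k)=(1-\lambda_k)(1-\delta_{0k})+(1-\operatorname{sign}(k))$, where $\delta_{ab}=1$ if $a=b$ and $0$ otherwise, and $\operatorname{sign}(0)=0$, $\operatorname{sign}(t)=1$ for $t>0$, $\operatorname{sign}(t)=-1$ for $t<0$. Let $m=\max_{i\in[0:N]}\|x_i\|$ and $m'=\max_{i\in[1:N]}\|x_i-x_{i-1}\|$. Then for every $n\in[0:N]$: (1) $x_{n,\lambda_n}=\sum_{k=0}^{n}\Big(\prod_{i=k+1}^{n}\lambda_i\Big)g(\lambda_k)\,x_k$ (an empty product equals $1$); (2) $\big\|\mathbb{E}_{\lambda_1,\dots,\lambda_n}[x_{n,\lambda_n}-x_n]\big\|\le\min\{3em,\ \tfrac{e}{1-e}m',\ Nem'\}$, and, for every fixed value of $\lambda_n\in[0,1)$, $\mathbb{E}_{\lambda_1,\dots,\lambda_{n-1}}\big[\|x_{n,\lambda_n}-x_n\|\big]\le 2\lambda_n m$.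
   Context: This is the Recursive Interpolation Method (RIM) for time series augmentation: the augmented features $x_{i,\lambda_i}$ are obtained by recursively taking convex combinations of the current original feature with the previous augmented feature. *)

From HB Require Import structures.
From mathcomp Require Import all_boot all_order all_algebra.
From mathcomp Require Import all_classical all_reals all_analysis.
Set Implicit Arguments. Unset Strict Implicit. Unset Printing Implicit Defensive.
Import Order.TTheory GRing.Theory Num.Theory.
Local Open Scope ring_scope.

Section RIM.
Variable R : realType.

Definition is_norm (nu : R -> R) : Prop :=
  [/\ (forall x, 0 <= nu x),
      (forall x, nu x = 0 -> x = 0),
      (forall a x, nu (a * x) = `|a| * nu x) &
      (forall x y, nu (x + y) <= nu x + nu y)].

(* x_{n,lambda_n}: recursive interpolation; lam 0 is a dummy value *)
Fixpoint rim (x lam : nat -> R) (n : nat) : R :=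
  match n with
  | 0 => x 0%N
  | k.+1 => (1 - lam k.+1) * x k.+1 + lam k.+1 * rim x lam k
  end.

Definition kdelta (a b : nat) : R := (a == b)%:R.

Definition gfun (lamk : R) (k : nat) : R :=
  (1 - lamk) * (1 - kdelta 0 k) + (1 - Num.sg (k%:R : R)).

Definition upd (lam : nat -> R) (i : nat) (t : R) : nat -> R :=
  fun j => if j == i then t else lam j.

(* Expectation over lambda_1, ..., lambda_n drawn i.i.d. from D, written as the
   iterated integral; the remaining coordinates are taken from lam. *)
Fixpoint Eiid (D : probability R R) (n : nat) (F : (nat -> R) -> R)
  (lam : nat -> R) : R :=
  match n with
  | 0 => F lam
  | k.+1 => Eiid D k (fun l => Rintegral D setT (fun t => F (upd l k.+1 t))) lam
  end.

Definition meanD (D : probability R R) : R := Rintegral D setT (fun t => t).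

End RIM.

From HB Require Import structures.
From mathcomp Require Import all_boot all_order all_algebra.
From mathcomp Require Import all_classical all_reals all_analysis.
From mathcomp Require Import ring lra.
Import Order.TTheory GRing.Theory Num.Theory HBNNSimple.

Set Implicit Arguments.
Unset Strict Implicit.
Unset Printing Implicit Defensive.

Local Open Scope ring_scope.
Local Open Scope classical_set_scope.

(* Each weight lambda_i enters x_{n,lambda_n} affinely and the earlier weights
   do not depend on it, so integrating out lambda_n, ..., lambda_1 in turn
   replaces every weight by the mean e: the expectation is y_n, the same
   recursion run with the constant weight e.  The error d_k = y_k - x_k obeys
   d_(k+1) = e (d_k + x_k - x_(k+1)), whence |d_n| <= 2em, |d_n| <= e m'/(1-e)
   (a geometric sum) and |d_n| <= n e m'.  For fixed lambda_n = t,
   x_{n,lambda_n} - x_n = t (x_{n-1,lambda_(n-1)} - x_n), and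
   x_{n-1,lambda_(n-1)} is a convex combination of x_0, ..., x_(n-1), so its
   norm is at most 2tm.  Since D lives on [0,1), such pointwise bounds survive
   integration, and 0 <= e < 1. *)

Lemma Rintegral_gt0 d (T : measurableType d) (R : realType)
    (mu : {measure set T -> \bar R}) (A : set T) (f : T -> R) :
  measurable A -> mu.-integrable A (EFin \o f) -> (0 < mu A)%E ->
  (forall t, A t -> 0 < f t) -> 0 < \int[mu]_(t in A) f t.
Proof.
move=> mA intf muA_gt0 f_gt0.
have f_ge0 t : A t -> 0 <= f t by move=> /f_gt0/ltW.
rewrite lt_def Rintegral_ge0 // andbT; apply/eqP => intf0.
have absf0 : (\int[mu]_(t in A) `|(f t)%:E| = 0)%E.
  rewrite (eq_integral (EFin \o f)); last first.
    by move=> t /[!inE] At; rewrite gee0_abs ?lee_fin ?f_ge0.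
  by rewrite -(fineK (integrable_fin_num mA intf)) [fine _]intf0.
have [N [mN muN0 AfN]] := (ae_eq_integral_abs mu mA
  (measurable_int mu intf)).1 absf0.
suff : (mu A <= mu N)%E by rewrite muN0 leNgt muA_gt0.
apply: le_measure; rewrite ?inE //= => t At; apply: AfN => /(_ At) /= [] /eqP.
by rewrite gt_eqF ?f_gt0.
Qed.

Section concentrated_probability.
Context d (T : measurableType d) (R : realType) (P : probability T R).
Variable A : set T.
Hypotheses (mA : measurable A) (PA1 : P A = 1%E).

Lemma probability_setC_concentrated : P (~` A) = 0%E.
Proof. by rewrite probability_setC // PA1 subee. Qed.

Lemma concentrated_nonempty : A !=set0.
Proof.
apply/set0P/eqP => A0; move: PA1.
by rewrite A0 measure0 => /esym/eqP; rewrite onee_eq0.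
Qed.

(* No measurability of f is assumed: the integral of a nonnegative function is
   the supremum over the simple functions below it.  The integrands met when
   integrating out one weight at a time are integrals themselves, whose
   measurability is not at hand. *)
Lemma integral_le_concentrated (f : T -> R) C : (forall t, 0 <= f t) ->
  (forall t, A t -> f t <= C) -> (\int[P]_(t in setT) (f t)%:E <= C%:E)%E.
Proof.
move=> f_ge0 fC.
have C_ge0 : 0 <= C by have [t /fC] := concentrated_nonempty; exact: le_trans.
rewrite ge0_integralTE; last by move=> t; rewrite lee_fin.
apply: ge_ereal_sup => _ [h /= hf <-]; rewrite -integralT_nnsfun.
rewrite -[C%:E]mule1 -(probability_setT P) -integral_cst //.
apply: ae_ge0_le_integral => //.
- by move=> t _; rewrite lee_fin.
- by apply/measurable_realfun.measurable_EFinP; exact: measurable_funPT.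
exists (~` A); split; first exact: measurableC.
  exact: probability_setC_concentrated.
by move=> t /= hC At; apply: hC => _; rewrite (le_trans (hf t)) // lee_fin fC.
Qed.

Lemma Rintegral_le_concentrated (f : T -> R) C : (forall t, 0 <= f t) ->
  (forall t, A t -> f t <= C) -> \int[P]_(t in setT) f t <= C.
Proof.
move=> f_ge0 fC; have := integral_le_concentrated f_ge0 fC.
have : (0 <= \int[P]_(t in setT) (f t)%:E)%E.
  by apply: integral_ge0 => t _; rewrite lee_fin.
by rewrite /Rintegral; case: (\int[P]_(t in setT) _)%E.
Qed.

Lemma Rintegral_setT_concentrated (f : T -> R) :
  P.-integrable setT (EFin \o f) ->
  \int[P]_(t in setT) f t = \int[P]_(t in A) f t.
Proof.
move=> intf; rewrite /Rintegral (negligible_integral (N := ~` A) _ _ intf) //.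
- by rewrite setTD setCK.
- exact: measurableC.
- exact: probability_setC_concentrated.
Qed.

Lemma Rintegral_gt0_concentrated (f : T -> R) :
  P.-integrable setT (EFin \o f) -> (forall t, A t -> 0 < f t) ->
  0 < \int[P]_(t in setT) f t.
Proof.
move=> intf f_gt0; rewrite (Rintegral_setT_concentrated intf).
have PA_gt0 : (0 < P A)%E by rewrite PA1 lte01.
by apply: Rintegral_gt0 PA_gt0 _ => //; exact: integrableS intf.
Qed.

End concentrated_probability.

Section unit_interval_distribution.
Context (R : realType) (D : probability R R).
Hypothesis D01 : D `[0%R, 1%R[ = 1%E.

Let m01 : measurable (`[0, 1[ : set R) := measurable_itv _.

Lemma integrable_id_unit_interval : D.-integrable setT (EFin \o id).
Proof.
apply/integrableP; split; first exact/measurable_realfun.measurable_EFinP.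
apply: le_lt_trans (ltey 1%:E).
apply: (integral_le_concentrated m01 D01) => // t; rewrite /= in_itv /=.
by move=> /andP[t_ge0 t_lt1]; rewrite ger0_norm // ltW.
Qed.

Lemma integrable_scale_unit_interval (b : R) :
  D.-integrable setT (EFin \o ( *%R b)).
Proof.
by apply: eq_integrable (integrableZl _ b integrable_id_unit_interval).
Qed.

Lemma integrable_affine_unit_interval (a b : R) :
  D.-integrable setT (EFin \o (fun t => a + b * t)).
Proof.
by apply: eq_integrable (integrableD measurableT
  (finite_measure_integrable_cst D a measurableT)
  (integrable_scale_unit_interval b)).
Qed.

Lemma Rintegral_affine (a b : R) :
  \int[D]_(t in setT) (a + b * t) = a + b * meanD D.
Proof.
rewrite RintegralD //; last 2 first.
- exact: finite_measure_integrable_cst.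
- exact: integrable_scale_unit_interval.
rewrite Rintegral_cst // [fine _](congr1 fine (probability_setT D)) mulr1.
by rewrite RintegralZl //; exact: integrable_id_unit_interval.
Qed.

Lemma meanD_ge0 : 0 <= meanD D.
Proof.
rewrite /meanD.
rewrite (Rintegral_setT_concentrated m01 D01 integrable_id_unit_interval).
by apply: Rintegral_ge0 => t; rewrite /= in_itv => /andP[].
Qed.

Lemma meanD_lt1 : meanD D < 1.
Proof.
rewrite -subr_gt0 -mulN1r -Rintegral_affine.
have int1B := integrable_affine_unit_interval 1 (-1).
apply: (Rintegral_gt0_concentrated m01 D01 int1B).
by move=> t; rewrite /= in_itv /= mulN1r subr_gt0 => /andP[].
Qed.

End unit_interval_distribution.

Section rim_algebra.
Context (R : realType).
Implicit Types (x lam : nat -> R) (t : R).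

Lemma gfun0 t : gfun t 0 = 1.
Proof. by rewrite /gfun /kdelta eqxx sgr0 /=; ring. Qed.

Lemma gfunS t k : gfun t k.+1 = 1 - t.
Proof. by rewrite /gfun /kdelta /= gtr0_sg ?ltr0Sn //; ring. Qed.

Lemma rim_prod_sum x lam n : rim x lam n =
  \sum_(0 <= k < n.+1) (\prod_(k.+1 <= i < n.+1) lam i) * gfun (lam k) k * x k.
Proof.
elim: n => [|n IHn]; first by rewrite big_nat1 big_geq // gfun0 /=; ring.
rewrite big_nat_recr //= (big_geq (leqnn n.+2)) mul1r gfunS IHn big_distrr /=.
rewrite addrC; congr (_ + _); apply: eq_big_nat => k /andP[_ kn].
by rewrite [in RHS]big_nat_recr //=; ring.
Qed.

Lemma rim_upd x lam j t k : (k < j)%N -> rim x (upd lam j t) k = rim x lam k.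
Proof.
elim: k => [//|k IHk] kj /=.
by rewrite IHk ?(ltnW kj) // /upd eq_sym (gtn_eqF kj).
Qed.

Lemma rim_updS x lam k t :
  rim x (upd lam k.+1 t) k.+1 = (1 - t) * x k.+1 + t * rim x lam k.
Proof. by rewrite /= rim_upd // /upd eqxx. Qed.

End rim_algebra.

Section norm.
Context (R : realType) (nu : R -> R).
Hypothesis nu_norm : is_norm nu.

Lemma nu_ge0 y : 0 <= nu y. Proof. by case: nu_norm. Qed.
Lemma nuZ a y : nu (a * y) = `|a| * nu y. Proof. by case: nu_norm. Qed.
Lemma nuD y z : nu (y + z) <= nu y + nu z. Proof. by case: nu_norm. Qed.

Lemma nu0 : nu 0 = 0.
Proof. by have := nuZ 0 0; rewrite mul0r normr0 mul0r. Qed.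

Lemma nuN y : nu (- y) = nu y.
Proof. by rewrite -mulN1r nuZ normrN1 mul1r. Qed.

Lemma nu_distC y z : nu (y - z) = nu (z - y).
Proof. by rewrite -opprB nuN. Qed.

Lemma nuB y z : nu (y - z) <= nu y + nu z.
Proof. by rewrite -(nuN z); exact: nuD. Qed.

Lemma nu_convex_le a y z m : 0 <= a <= 1 -> nu y <= m -> nu z <= m ->
  nu ((1 - a) * y + a * z) <= m.
Proof.
move=> /andP[a_ge0 a_le1] ym zm.
rewrite (le_trans (nuD _ _)) // !nuZ ger0_norm ?subr_ge0 // ger0_norm //.
have := nu_ge0 y; have := nu_ge0 z; nra.
Qed.

Lemma nu_rim_le (x lam : nat -> R) m j :
  (forall i, (i <= j)%N -> nu (x i) <= m) ->
  (forall i, (0 < i <= j)%N -> 0 <= lam i <= 1) -> nu (rim x lam j) <= m.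
Proof.
elim: j => [|j IH] xm lam01 /=; first exact: xm.
apply: nu_convex_le; [by apply: lam01; rewrite /= leqnn | exact: xm |].
apply: IH => [i ij | i /andP[i_gt0 ij]]; first exact: xm (leqW ij).
by rewrite lam01 // i_gt0 leqW.
Qed.

End norm.

Section rim_bounds.
Context (R : realType) (nu : R -> R) (x : nat -> R) (N : nat) (m m' : R).
Hypotheses (nu_norm : is_norm nu)
  (x_le : forall i, (i <= N)%N -> nu (x i) <= m)
  (dx_le : forall i, (i < N)%N -> nu (x i.+1 - x i) <= m')
  (m'_ge0 : 0 <= m').

Let m_ge0 : 0 <= m := le_trans (nu_ge0 nu_norm _) (x_le (leq0n N)).

Lemma nu_rim_upd_sub_le (lam : nat -> R) n t : (n <= N)%N -> 0 <= t <= 1 ->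
  (forall i, (0 < i <= n.-1)%N -> 0 <= lam i <= 1) ->
  nu (rim x (upd lam n t) n - x n) <= 2 * t * m.
Proof.
case: n => [_|k kN] /andP[t_ge0 t_le1] lam01.
  by rewrite /= subrr nu0 // !mulr_ge0.
have rim_le : nu (rim x lam k) <= m.
  apply: (nu_rim_le nu_norm) => // i ik.
  exact: x_le (leq_trans ik (ltnW kN)).
rewrite rim_updS (_ : _ - _ = t * (rim x lam k - x k.+1)); last by ring.
rewrite nuZ // ger0_norm // [2 * _]mulrC -mulrA ler_wpM2l // mulr_natl mulr2n.
by rewrite (le_trans (nuB nu_norm _ _)) // lerD // x_le.
Qed.

Section constant_weights.
Variable c : R.
Hypotheses (c_ge0 : 0 <= c) (c_le1 : c <= 1).

Lemma nu_rim_cst_subS k : (k < N)%N ->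
  nu (rim x (fun=> c) k.+1 - x k.+1) <= c * (nu (rim x (fun=> c) k - x k) + m').
Proof.
move=> kN.
rewrite (_ : _ - _ = c * ((rim x (fun=> c) k - x k) + (x k - x k.+1))).
  rewrite nuZ // ger0_norm // ler_wpM2l // (le_trans (nuD nu_norm _ _)) //.
  by rewrite lerD2l nu_distC // dx_le.
by rewrite /=; ring.
Qed.

Lemma nu_rim_cst_sub_le k : (k <= N)%N ->
  nu (rim x (fun=> c) k - x k) <= 2 * c * m.
Proof.
case: k => [_|k kN]; first by rewrite /= subrr nu0 // !mulr_ge0.
rewrite (_ : _ - _ = c * (rim x (fun=> c) k - x k.+1)); last by rewrite /=; ring.
rewrite nuZ // ger0_norm // [2 * _]mulrC -mulrA ler_wpM2l // mulr_natl mulr2n.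
rewrite (le_trans (nuB nu_norm _ _)) // lerD ?x_le //.
apply: nu_rim_le => // [i ik|i _]; last by rewrite c_ge0 c_le1.
exact: x_le (leq_trans ik (ltnW kN)).
Qed.

Lemma nu_rim_cst_sub_le_geometric k : c < 1 -> (k <= N)%N ->
  nu (rim x (fun=> c) k - x k) <= c / (1 - c) * m'.
Proof.
move=> c_lt1; have q_ge0 : 0 <= c / (1 - c) by rewrite divr_ge0 // subr_ge0 ltW.
have qE : c * (c / (1 - c)) + c = c / (1 - c).
  by field; rewrite subr_eq0 eq_sym lt_eqF.
elim: k => [_|k IH kN]; first by rewrite /= subrr nu0 // mulr_ge0.
rewrite (le_trans (nu_rim_cst_subS kN)) // -[X in _ <= X * _]qE.
by rewrite mulrDl mulrDr lerD2r -mulrA ler_wpM2l // IH // ltnW.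
Qed.

Lemma nu_rim_cst_sub_le_linear k : (k <= N)%N ->
  nu (rim x (fun=> c) k - x k) <= k%:R * c * m'.
Proof.
elim: k => [_|k IH kN]; first by rewrite /= subrr nu0 // !mul0r.
have dk_le : nu (rim x (fun=> c) k - x k) <= k%:R * m'.
  rewrite (le_trans (IH (ltnW kN))) // -mulrA ler_wpM2l //.
  by rewrite -[leRHS]mul1r ler_wpM2r.
rewrite (le_trans (nu_rim_cst_subS kN)) // -natr1 -mulrA mulrDl mul1r.
by rewrite mulrDr lerD2r mulrCA ler_wpM2l.
Qed.

End constant_weights.
End rim_bounds.

Section iterated_expectation.
Context (R : realType) (D : probability R R).
Hypothesis D01 : D `[0%R, 1%R[ = 1%E.

Lemma Eiid_rim_affine (x : nat -> R) k a b lam :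
  Eiid D k (fun l => a + b * rim x l k) lam = a + b * rim x (fun=> meanD D) k.
Proof.
elim: k a b lam => [//|k IH] a b lam /=.
rewrite (_ : (fun l => _) = fun l =>
    (a + b * (1 - meanD D) * x k.+1) + b * meanD D * rim x l k).
  by rewrite IH; ring.
apply: funext => l; rewrite (_ : (fun t => _) = fun t =>
    (a + b * x k.+1) + b * (rim x l k - x k.+1) * t).
  by rewrite Rintegral_affine //; ring.
by apply: funext => t; rewrite rim_upd // /upd eqxx; ring.
Qed.

Lemma Eiid_le k (F : (nat -> R) -> R) C lam : (forall l, 0 <= F l) ->
  (forall l, (forall i, (0 < i <= k)%N -> 0 <= l i < 1) -> F l <= C) ->
  Eiid D k F lam <= C.
Proof.
elim: k F lam => [|k IH] F lam F_ge0 F_le /=; first by apply: F_le => -[].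
apply: IH => [l | l l01]; first exact: Rintegral_ge0.
apply: (Rintegral_le_concentrated (measurable_itv _) D01) => [t | t t01].
  exact: F_ge0.
apply: F_le => i /andP[i_gt0 ik]; rewrite /upd.
case: eqP => [_ | /eqP ik1]; first by move: t01; rewrite /= in_itv.
by apply: l01; rewrite i_gt0 -ltnS ltn_neqAle ik1 ik.
Qed.

End iterated_expectation.

Theorem theorem1 (R : realType) (N : nat) (x : nat -> R) (nu : R -> R)
  (D : probability R R) :
  is_norm nu ->
  D `[0%R, 1%R[%classic = 1%E ->
  let e := meanD D in
  let m := \big[Num.max/0]_(0 <= i < N.+1) nu (x i) in
  let m' := \big[Num.max/0]_(1 <= i < N.+1) nu (x i - x i.-1) in
  forall n : nat, (n <= N)%N ->
    (forall lam : nat -> R,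
       (forall i, (1 <= i <= N)%N -> 0 <= lam i < 1) ->
       rim x lam n =
       \sum_(0 <= k < n.+1)
          (\prod_(k.+1 <= i < n.+1) lam i) * gfun (lam k) k * x k)
    /\
    (forall lam : nat -> R,
       nu (Eiid D n (fun l => rim x l n - x n) lam)
       <= Num.min (3 * e * m) (Num.min (e / (1 - e) * m') (N%:R * e * m')))
    /\
    (forall (lam : nat -> R) (t : R), 0 <= t < 1 ->
       Eiid D n.-1 (fun l => nu (rim x (upd l n t) n - x n)) lam
       <= 2 * t * m).
Proof.
move=> nu_norm D01 e m m' n nN.
have [e_ge0 e_lt1] := (meanD_ge0 D01, meanD_lt1 D01); have e_le1 := ltW e_lt1.
have x_le i : (i <= N)%N -> nu (x i) <= m.
  move=> iN; apply: (le_bigmax_seq _ i _ (nu \o x)) => //.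
  by rewrite mem_index_iota.
have dx_le i : (i < N)%N -> nu (x i.+1 - x i) <= m'.
  move=> iN; apply: (le_bigmax_seq _ i.+1 _ (fun j => nu (x j - x j.-1))) => //.
  by rewrite mem_index_iota.
have m_ge0 : 0 <= m by exact: bigmax_ge_id.
have m'_ge0 : 0 <= m' by exact: bigmax_ge_id.
split; first by move=> lam _; exact: rim_prod_sum.
split=> [lam | lam t /andP[t_ge0 t_lt1]].
  have -> : (fun l => rim x l n - x n) = (fun l => - x n + 1 * rim x l n).
    by apply: funext => l; rewrite mul1r addrC.
  rewrite Eiid_rim_affine // mul1r addrC !le_min; apply/and3P; split.
  - have := nu_rim_cst_sub_le nu_norm x_le e_ge0 e_le1 nN.
    by move/le_trans; apply; rewrite ler_wpM2r // ler_wpM2r // ler_nat.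
  - exact: (nu_rim_cst_sub_le_geometric nu_norm dx_le m'_ge0 e_ge0 e_lt1 nN).
  - have := nu_rim_cst_sub_le_linear nu_norm dx_le m'_ge0 e_ge0 e_le1 nN.
    by move/le_trans; apply; rewrite ler_wpM2r // ler_wpM2r // ler_nat.
apply: (Eiid_le D01) => [l | l l01]; first exact: nu_ge0.
apply: (nu_rim_upd_sub_le nu_norm x_le) => //; first by rewrite t_ge0 ltW.
by move=> i /l01 /andP[-> /ltW].
Qed.
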